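(* Let $\{x_i\}_{i\in\mathcal N_+}$ and $\{x_j\}_{j\in\mathcal N_-}$ be two finite nonempty families of vectors in $\mathbb R^s$ (indexed by disjoint index sets $\mathcal N_+$, $\mathcal N_-$), and define the centroids $x_p^c=\frac{1}{|\mathcal N_+|}\sum_{i\in\mathcal N_+}x_i$ and $x_n^c=\frac{1}{|\mathcal N_-|}\sum_{j\in\mathcal N_-}x_j$, the class-imbalance ratio $r_c=\frac{|\mathcal N_+|}{|\mathcal N_-|}$, and the scale-class-imbalance ratio $$r_{sc}=r_c\sqrt{\frac{\|x_p^c\|^2+1}{\|x_n^c\|^2+1}}.$$ Assume the mean-zero normalization $\sum_{i\in\mathcal N_+}x_i+\sum_{j\in\mathcal N_-}x_j=0$, and that $x_p^c\neq 0$ and $x_n^c\neq 0$. Then: if $r_{sc}=1$, we have $r_c=1$; and if $r_{sc}\neq 1$, we have $|r_{sc}-1|<|r_c-1|$.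
   Context: $\|\cdot\|$ denotes the Euclidean norm on $\mathbb R^s$ and $|\cdot|$ the cardinality of a finite set. *)

(* vectors in R^s are row vectors 'rV[R]_s over a realType R. *)
From HB Require Import structures.
From mathcomp Require Import all_boot all_order all_algebra.
From mathcomp Require Import reals.
Set Implicit Arguments. Unset Strict Implicit. Unset Printing Implicit Defensive.
Import Order.TTheory GRing.Theory Num.Theory.
Local Open Scope ring_scope.

Definition enorm (R : realType) (s : nat) (v : 'rV[R]_s) : R :=
  Num.sqrt (\sum_(k < s) v 0 k ^+ 2).

Definition centroid (R : realType) (s : nat) (T : finType) (x : T -> 'rV[R]_s)
  : 'rV[R]_s := (#|T|%:R)^-1 *: \sum_(i : T) x i.

Definition r_c (R : realType) (P N : finType) : R := #|P|%:R / #|N|%:R.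

Definition r_sc (R : realType) (s : nat) (P N : finType)
  (xp : P -> 'rV[R]_s) (xn : N -> 'rV[R]_s) : R :=
  r_c R P N * Num.sqrt ((enorm (centroid xp) ^+ 2 + 1) / (enorm (centroid xn) ^+ 2 + 1)).

(** The balance condition gives |N+| x_p^c = -|N-| x_n^c, so with a = ||x_n^c||^2 > 0
    the squared scale-class-imbalance ratio is the weighted mean
    r_sc^2 = (a * 1 + 1 * r_c^2) / (a + 1).  It therefore lies strictly between 1 and
    r_c^2 unless r_c = 1, and taking square roots, r_sc lies strictly between 1 and r_c. *)

From HB Require Import structures.
From mathcomp Require Import all_boot all_order all_algebra.
From mathcomp Require Import reals.
From mathcomp Require Import ring lra.
Set Implicit Arguments. Unset Strict Implicit. Unset Printing Implicit Defensive.
Import Order.TTheory GRing.Theory Num.Theory.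
Local Open Scope ring_scope.

Lemma weighted_mean_between (R : realFieldType) (a u v : R) : 0 < a ->
  u * (a + 1) = a + v ->
  [/\ 1 < v -> 1 < u < v, v < 1 -> v < u < 1 & v = 1 -> u = 1].
Proof.
move=> a0 E; split=> v1; try by apply/andP; split; nra.
by apply: (mulIf (_ : a + 1 != 0)); lra.
Qed.

Lemma sqr_weighted_mean_closer1 (R : realFieldType) (t r a : R) :
  0 <= t -> 0 <= r -> 0 < a -> t ^+ 2 * (a + 1) = a + r ^+ 2 ->
  (t = 1 -> r = 1) /\ (t != 1 -> `|t - 1| < `|r - 1|).
Proof.
move=> t0 r0 a0 /(weighted_mean_between a0) [gt1 lt1 eq1].
have [r1|r1|r1] := ltrgtP r 1.
- have /andP[rt t1] : r ^+ 2 < t ^+ 2 < 1 by apply: lt1; nra.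
  by split=> [|_]; rewrite ?ltr0_norm; nra.
- have /andP[t1 tr] : 1 < t ^+ 2 < r ^+ 2 by apply: gt1; nra.
  by split=> [|_]; rewrite ?gtr0_norm; nra.
- subst r; have t1 : t = 1 by have := eq1 (expr1n _ 2); nra.
  by rewrite t1 eqxx.
Qed.

Section EuclideanNorm.
Variables (R : realType) (s : nat).
Implicit Types (v : 'rV[R]_s) (c : R).

Lemma enormZ c v : enorm (c *: v) = `|c| * enorm v.
Proof.
rewrite /enorm; under eq_bigr do rewrite mxE exprMn.
by rewrite -mulr_sumr sqrtrM ?sqr_ge0 // sqrtr_sqr.
Qed.

Lemma enorm_gt0 v : v != 0 -> 0 < enorm v.
Proof.
move=> v_neq0; rewrite sqrtr_gt0 lt_def sumr_ge0 ?andbT => [|k _]; last exact: sqr_ge0.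
apply: contra v_neq0 => /eqP sum_sqr_eq0; apply/eqP/rowP => k; rewrite mxE.
by apply/eqP; rewrite -sqrf_eq0; apply/eqP/(psumr_eq0P _ sum_sqr_eq0) => // i _; apply: sqr_ge0.
Qed.

End EuclideanNorm.

Lemma scaler_card_centroid (R : realType) (s : nat) (T : finType) (x : T -> 'rV[R]_s) :
  (0 < #|T|)%N -> #|T|%:R *: centroid x = \sum_(i : T) x i.
Proof. by move=> T_gt0; rewrite /centroid scalerA divff ?scale1r // pnatr_eq0 -lt0n. Qed.

Section Balanced.
Variables (R : realType) (s : nat) (P N : finType).
Variables (xp : P -> 'rV[R]_s) (xn : N -> 'rV[R]_s).
Hypotheses (P_gt0 : (0 < #|P|)%N) (N_gt0 : (0 < #|N|)%N).
Hypothesis balanced : \sum_(i : P) xp i + \sum_(j : N) xn j = 0.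

Lemma r_c_gt0 : 0 < r_c R P N.
Proof. by rewrite divr_gt0 ?ltr0n. Qed.

Lemma centroid_balanced : centroid xp = - (r_c R P N)^-1 *: centroid xn.
Proof.
apply: (scalerI (_ : #|P|%:R != 0 :> R)); first by rewrite pnatr_eq0 -lt0n.
rewrite scaler_card_centroid // scalerA mulrN invf_div mulrCA divff ?mulr1.
  by rewrite scaleNr scaler_card_centroid //; apply/eqP; rewrite -addr_eq0 balanced.
by rewrite pnatr_eq0 -lt0n.
Qed.

Lemma r_sc_sqr_weighted_mean :
  r_sc xp xn ^+ 2 * (enorm (centroid xn) ^+ 2 + 1) =
  enorm (centroid xn) ^+ 2 + r_c R P N ^+ 2.
Proof.
have rc_neq0 := lt0r_neq0 r_c_gt0.
have a1_gt0 : 0 < enorm (centroid xn) ^+ 2 + 1 by rewrite ltr_pwDr ?sqr_ge0.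
rewrite /r_sc exprMn sqr_sqrtr ?divr_ge0 ?addr_ge0 ?sqr_ge0 ?ltW //.
rewrite centroid_balanced enormZ normrN normfV gtr0_norm ?r_c_gt0 //.
by field; rewrite rc_neq0 lt0r_neq0.
Qed.

End Balanced.

Theorem theorem1 (R : realType) (s : nat) (P N : finType)
  (xp : P -> 'rV[R]_s) (xn : N -> 'rV[R]_s) :
  (0 < #|P|)%N -> (0 < #|N|)%N ->
  \sum_(i : P) xp i + \sum_(j : N) xn j = 0 ->
  centroid xp != 0 -> centroid xn != 0 ->
  (r_sc xp xn = 1 -> r_c R P N = 1) /\
  (r_sc xp xn != 1 -> `|r_sc xp xn - 1| < `|r_c R P N - 1|).
Proof.
move=> P_gt0 N_gt0 balanced _ xn_neq0.
apply: (sqr_weighted_mean_closer1 _ _ _ (r_sc_sqr_weighted_mean P_gt0 N_gt0 balanced)).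
- by rewrite mulr_ge0 ?sqrtr_ge0 ?ltW ?r_c_gt0.
- exact/ltW/r_c_gt0.
- by rewrite exprn_gt0 ?enorm_gt0.
Qed.
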